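(* Let $K$ be a complex with the maximum number of facets among all complexes in $\mathcal{K}(n,r,\beta)$. Then $K$ contains every $r$-element subset of $V(K)$ as an $(r-1)$-face, and $K$ is $(r-1)$-path connected.
   Context: A (finite abstract) simplicial complex $K$ on a finite vertex set $V(K)$ is a family of subsets of $V(K)$ closed under taking subsets and containing every singleton; it is on $n$ vertices if $|V(K)|=n$. An $i$-face is a member of cardinality $i+1$; facets are inclusion-maximal faces; $K$ is pure if all facets have the same dimension. Two distinct $i$-faces are up-neighbors if their union is an $(i+1)$-face. $K$ is $i$-path connected if for any two $i$-faces $F,G$ there is a sequence $F=F_1,\dots,F_m=G$ of $i$-faces in which consecutive terms are up-neighbors. $\beta_r(K)=\dim_{\mathbb R}H_r(K;\mathbb R)$. $\mathcal{K}(n,r,\beta)$ denotes the set of pure $r$-dimensional simplicial complexes on $n$ vertices with $\beta_r=\beta$ ($r\ge 1$). *)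

From HB Require Import structures.
From mathcomp Require Import all_boot all_order all_algebra.
From Stdlib Require Import Reals.
From mathcomp Require Import Rstruct.
Set Implicit Arguments. Unset Strict Implicit. Unset Printing Implicit Defensive.
Import GRing.Theory.

Definition simplicial_complex (n : nat) (K : {set {set 'I_n}}) : Prop :=
  (forall F G : {set 'I_n}, F \in K -> G \subset F -> G \in K) /\
  (forall v : 'I_n, [set v] \in K).

Definition facets (n : nat) (K : {set {set 'I_n}}) : {set {set 'I_n}} :=
  [set F in K | [forall G in K, (F \subset G) ==> (G == F)]].

Definition has_dim (n : nat) (K : {set {set 'I_n}}) (r : nat) : Prop :=
  (exists2 F, F \in K & #|F| = r.+1) /\ (forall F, F \in K -> (#|F| <= r.+1)%N = true).

Definition pure_of_dim (n : nat) (K : {set {set 'I_n}}) (r : nat) : Prop :=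
  has_dim K r /\ (forall F, F \in facets K -> #|F| = r.+1).

(* faces with exactly k elements, i.e. (k-1)-faces *)
Definition faces_card (n : nat) (K : {set {set 'I_n}}) (k : nat) : {set {set 'I_n}} :=
  [set F in K | #|F| == k].

(* Coefficient of G in the simplicial boundary of F, vertices ordered by 'I_n:
   if F = G + {v}, it is (-1)^(number of vertices of F smaller than v). *)
Local Open Scope ring_scope.
Definition bcoef (n : nat) (F G : {set 'I_n}) : R :=
  if (G \subset F) && (#|F :\: G| == 1%N) then
    match [pick v in F :\: G] with
    | Some v => (-1) ^+ #|[set u in F | ltn (nat_of_ord u) (nat_of_ord v)]|
    | None => 0
    end
  else 0.

(* Matrix of the boundary map d_k : C_k(K;R) -> C_{k-1}(K;R)
   (rows: k-faces, columns: (k-1)-faces; row-vector convention u *m A). *)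
Definition bdry (n : nat) (K : {set {set 'I_n}}) (k : nat)
  : 'M[R]_(#|faces_card K k.+1|, #|faces_card K k|) :=
  \matrix_(i < #|faces_card K k.+1|, j < #|faces_card K k|)
     bcoef (enum_val i) (enum_val j).

Local Close Scope ring_scope.
(* beta_r(K) = dim H_r(K;R) = dim ker d_r - rank d_{r+1} *)
Definition betti (n : nat) (K : {set {set 'I_n}}) (r : nat) : nat :=
  (#|faces_card K r.+1| - \rank (bdry K r) - \rank (bdry K r.+1))%N.

Definition Kclass (n r beta : nat) (K : {set {set 'I_n}}) : Prop :=
  simplicial_complex K /\ pure_of_dim K r /\ betti K r = beta.

Definition up_neighbors (n : nat) (K : {set {set 'I_n}}) (i : nat) (F G : {set 'I_n}) : bool :=
  [&& F \in K, G \in K, #|F| == i.+1, #|G| == i.+1, F != G,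
      F :|: G \in K & #|F :|: G| == i.+2].

Definition path_connected (n : nat) (K : {set {set 'I_n}}) (i : nat) : Prop :=
  forall F G, F \in K -> G \in K -> #|F| = i.+1 -> #|G| = i.+1 ->
    exists s : seq {set 'I_n}, path (up_neighbors K i) F s /\ last F s = G.

From mathcomp Require Import all_boot all_algebra.
From Stdlib Require Import Reals.
From mathcomp Require Import Rstruct ring zify.
Set Implicit Arguments. Unset Strict Implicit. Unset Printing Implicit Defensive.
Import GRing.Theory.

(* Let K be maximal, and suppose an (r+1)-set s and a function phi on r-sets
   are such that phi vanishes on the boundary of every r-face of K but not on
   the boundary of s.  Then adding s with all its subsets raises both the
   number of r-faces and the rank of d_r by one, so beta_r is unchanged while
   a facet is gained; by maximality no such pair exists.  A missing r-set S is
   detected by the indicator of S (with s = S + v).  If the ridges s - a and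
   s - b were in different components of the ridge graph, the function
   X |-> [X in the component of s - a] * [X : s - {a, b}] would detect s: it
   vanishes on the boundaries of r-faces of K because d o d = 0 and all ridges
   of an r-face are neighbours.  Finally any two ridges are linked by a chain
   of such swaps. *)

Section BoundaryCoefficients.
Variable n : nat.
Implicit Types (t D F G X : {set 'I_n}) (a b v : 'I_n).
Local Open Scope ring_scope.

Definition nbelow F v : nat := #|[set u in F | ltn u v]|.

Lemma bcoef_support F G : bcoef F G != 0 -> G \subset F /\ #|F :\: G| = 1%N.
Proof. by rewrite /bcoef; case: andP => [[-> /eqP]|]; rewrite ?eqxx. Qed.

Lemma bcoef_single F G v :
  G \subset F -> F :\: G = [set v] -> bcoef F G = (-1) ^+ nbelow F v.
Proof.
move=> sGF dFG; rewrite /bcoef sGF dFG cards1 eqxx /=.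
by case: pickP => [x|/(_ v)]; rewrite in_set1 ?eqxx // => /eqP ->.
Qed.

Lemma bcoef_neq0 F G : G \subset F -> #|F :\: G| = 1%N -> bcoef F G != 0.
Proof.
move=> sGF /eqP/cards1P [v dFG]; rewrite (bcoef_single sGF dFG).
by rewrite expf_neq0 // oppr_eq0 oner_eq0.
Qed.

Lemma setD_setD1 t a : a \in t -> t :\: (t :\ a) = [set a].
Proof.
move=> ta; apply/setP => x; rewrite !inE.
by case: (eqVneq x a) => [->|]; rewrite ?eqxx ?ta //=; case: (x \in t).
Qed.

Lemma bcoef_setD1_neq0 t a : a \in t -> bcoef t (t :\ a) != 0.
Proof. by move=> ta; rewrite bcoef_neq0 ?subsetDl // setD_setD1 ?cards1. Qed.

Lemma nbelow_setD1 t a b : a \in t -> a != b ->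
  nbelow t b = addn (nbelow (t :\ a) b) (ltn a b).
Proof.
move=> ta ab; rewrite /nbelow; have [ltab|leba] := ltnP a b.
  rewrite (cardsD1 a) !inE ta /= ltab addnC; congr (_ + _)%N.
  by apply: eq_card => x; rewrite !inE ?andbA.
have -> : ltn a b = false by rewrite /= ltnNge leba.
rewrite addn0; apply: eq_card => x; rewrite !inE.
by case: eqP => [->|//]; rewrite ta ltnNge leba.
Qed.

Lemma setD1_setD_pair t D a b :
  t :\: D = [set a; b] -> a != b -> (t :\ a) :\: D = [set b].
Proof. by move=> dtD ab; rewrite setDDl setUC -setDDl dtD setU1K // inE. Qed.

Lemma sum_bcoef_indicator t G : \sum_X bcoef t X * (X == G)%:R = bcoef t G.
Proof.
rewrite (bigD1 G) //= eqxx mulr1 big1 ?addr0 // => X /negbTE ->.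
by rewrite mulr0.
Qed.

(* The two ways of removing [a] and [b] from [t] carry opposite signs:
   this is [d \o d = 0] for the boundary coefficients. *)
Lemma bcoef_bcoef_cancel t D a b :
  D \subset t -> t :\: D = [set a; b] -> a != b ->
  bcoef t (t :\ a) * bcoef (t :\ a) D + bcoef t (t :\ b) * bcoef (t :\ b) D = 0.
Proof.
wlog ltab : a b / ltn a b.
  move=> W sDt dtD ab; case: (ltngtP a b) => [ltab|gtab|eqab]; first exact: W.
    by rewrite addrC; apply: W; rewrite // 1?eq_sym // dtD setUC.
  by move: ab; rewrite -(inj_eq val_inj) /= eqab eqxx.
move=> sDt dtD ab.
have tDa : a \in t :\: D by rewrite dtD !inE eqxx.
have tDb : b \in t :\: D by rewrite dtD !inE eqxx orbT.
have [[ta naD] [tb nbD]] := (setDP tDa, setDP tDb).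
have dtaD := setD1_setD_pair dtD ab.
have dtbD : (t :\ b) :\: D = [set a].
  by apply: setD1_setD_pair; rewrite 1?eq_sym // dtD setUC.
rewrite (bcoef_single _ (setD_setD1 ta)) ?subsetDl //.
rewrite (bcoef_single _ (setD_setD1 tb)) ?subsetDl //.
rewrite (bcoef_single _ dtaD) ?subsetD1 ?sDt ?naD //.
rewrite (bcoef_single _ dtbD) ?subsetD1 ?sDt ?nbD //.
rewrite (nbelow_setD1 tb) 1?eq_sym // (nbelow_setD1 ta ab).
have -> : ltn b a = false by rewrite /ltn /= ltnNge ltnW.
rewrite ltab addn0 addn1 exprS; ring.
Qed.

Lemma bcoef_bcoef_support t X D : bcoef t X != 0 -> bcoef X D != 0 ->
  exists2 c, c \in t :\: D & X = t :\ c.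
Proof.
move=> /bcoef_support [sXt /eqP/cards1P [c dtX]] /bcoef_support [sDX _].
have /setDP [ct ncX] : c \in t :\: X by rewrite dtX set11.
exists c; last by rewrite -dtX setDDr setDv set0U (setIidPr sXt).
by rewrite inE ct andbT; apply: contra ncX; apply: (subsetP sDX).
Qed.

Lemma sum_bcoef_bcoef_pair t D a b (g : {set 'I_n} -> R) :
  D \subset t -> t :\: D = [set a; b] -> a != b ->
  \sum_X bcoef t X * (g X * bcoef X D) =
  bcoef t (t :\ a) * (g (t :\ a) * bcoef (t :\ a) D) +
  bcoef t (t :\ b) * (g (t :\ b) * bcoef (t :\ b) D).
Proof.
move=> sDt dtD ab.
have neq_ab : t :\ a != t :\ b.
  apply: contraNneq ab => /setP /(_ a); rewrite !inE eqxx /= => /esym.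
  have /setDP [ta _] : a \in t :\: D by rewrite dtD !inE eqxx.
  by rewrite ta andbT eq_sym => /negbFE.
rewrite (bigD1 (t :\ a)) // (bigD1 (t :\ b)) 1?eq_sym //= addrA.
rewrite [X in _ + X]big1 ?addr0 // => X /andP [Xa Xb].
have [-> | ntX] := eqVneq (bcoef t X) 0; first by rewrite mul0r.
have [-> | nXD] := eqVneq (bcoef X D) 0; first by rewrite !mulr0.
have [c] := bcoef_bcoef_support ntX nXD.
by rewrite dtD !inE => /orP [] /eqP -> eX; rewrite eX eqxx in Xa Xb.
Qed.

Lemma sum_bcoef_bcoef_eq0 t D (g : {set 'I_n} -> R) :
  #|t| = #|D|.+2 -> {in t &, forall a b, g (t :\ a) = g (t :\ b)} ->
  \sum_X bcoef t X * (g X * bcoef X D) = 0.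
Proof.
move=> ctD gt.
have [sDt|nsDt] := boolP (D \subset t); last first.
  apply: big1 => X _.
  have [-> | ntX] := eqVneq (bcoef t X) 0; first by rewrite mul0r.
  have [-> | nXD] := eqVneq (bcoef X D) 0; first by rewrite !mulr0.
  have [c _ eX] := bcoef_bcoef_support ntX nXD.
  have [sDX _] := bcoef_support nXD.
  by move: nsDt; rewrite (subset_trans sDX) // eX subsetDl.
have /cards2P [a [b [ab dtD]]] : #|t :\: D| == 2.
  by rewrite cardsDS // ctD -addn2 addKn.
have [ta tb] : a \in t /\ b \in t.
  by split; apply: (subsetP (subsetDl t D)); rewrite dtD !inE eqxx ?orbT.
rewrite (sum_bcoef_bcoef_pair _ sDt dtD ab) (gt b a) // mulrCA [X in _ + X]mulrCA -mulrDr.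
by rewrite bcoef_bcoef_cancel ?mulr0.
Qed.
End BoundaryCoefficients.

Section BoundaryRank.
Variable n : nat.
Local Notation N := #|{: {set 'I_n}}|.
Implicit Types (K L : {set {set 'I_n}}) (s rho X : {set 'I_n}).
Local Open Scope ring_scope.

Definition bdry_vec rho : 'rV[R]_N := \row_k bcoef rho (enum_val k).

Definition cochain_vec (phi : {set 'I_n} -> R) : 'cV[R]_N := \col_k phi (enum_val k).

(* The boundary matrix with its columns indexed by all subsets of 'I_n, so
   that complexes with different sets of faces can be compared. *)
Definition bdry_rows K r : 'M[R]_(#|faces_card K r.+1|, N) :=
  \matrix_i bdry_vec (enum_val i).

Definition cocycle K r (phi : {set 'I_n} -> R) :=
  forall rho, rho \in faces_card K r.+1 -> \sum_X bcoef rho X * phi X = 0.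

Lemma row_bdry_rows K r i : row i (bdry_rows K r) = bdry_vec (enum_val i).
Proof. exact: rowK. Qed.

Lemma bdry_vec_sub K r rho :
  rho \in faces_card K r.+1 -> (bdry_vec rho <= bdry_rows K r)%MS.
Proof. by move=> rhoK; rewrite -(enum_rankK_in rhoK rhoK) -row_bdry_rows row_sub. Qed.

Lemma bdry_vec_cochain rho phi :
  (bdry_vec rho *m cochain_vec phi) 0 0 = \sum_X bcoef rho X * phi X.
Proof.
rewrite mxE (big_enum_val (A := {: {set 'I_n}})) /=.
by apply: eq_bigr => k _; rewrite !mxE.
Qed.

Lemma cocycle_bdry_span K r phi s :
  cocycle K r phi -> (bdry_vec s <= bdry_rows K r)%MS ->
  \sum_X bcoef s X * phi X = 0.
Proof.
move=> Kphi /submxP [c ec]; rewrite -bdry_vec_cochain ec.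
suff Z : bdry_rows K r *m cochain_vec phi = 0 by rewrite -mulmxA Z mulmx0 mxE.
apply/matrixP => i j; rewrite ord1 [RHS]mxE.
have -> : (bdry_rows K r *m cochain_vec phi) i 0 =
          (bdry_vec (enum_val i) *m cochain_vec phi) 0 0.
  by rewrite !mxE; apply: eq_bigr => k _; rewrite !mxE.
by rewrite bdry_vec_cochain Kphi // enum_valP.
Qed.

Definition faces_embedding K r : 'M[R]_(#|faces_card K r|, N) :=
  \matrix_(j, k) (enum_val j == enum_val k)%:R.

Lemma faces_embedding_free K r : row_free (faces_embedding K r).
Proof.
have E : faces_embedding K r *m (faces_embedding K r)^T = 1%:M.
  apply/matrixP => j j'; rewrite !mxE.
  under eq_bigr => k _ do rewrite !mxE.
  rewrite (bigD1 (enum_rank (enum_val j))) //= enum_rankK eqxx mul1r.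
  rewrite big1 ?addr0; first by rewrite (inj_eq enum_val_inj) eq_sym; case: eqP.
  move=> k kj; case: eqP => [ek|]; last by rewrite mul0r.
  by move: kj; rewrite ek enum_valK eqxx.
rewrite /row_free eqn_leq rank_leq_row /=.
by rewrite -{1}(mxrank1 R #|faces_card K r|) -E mxrankM_maxl.
Qed.

Lemma bcoef_face_card K r rho X :
  simplicial_complex K -> rho \in faces_card K r.+1 -> bcoef rho X != 0 ->
  X \in faces_card K r.
Proof.
move=> [Kclosed _]; rewrite !inE => /andP [rhoK /eqP crho] /bcoef_support.
move=> [sXrho]; rewrite cardsDS // crho (Kclosed rho X rhoK sXrho) /=.
by have := subset_leq_card sXrho; rewrite crho => ? ?; apply/eqP; lia.
Qed.

Lemma bdry_rowsE K r :
  simplicial_complex K -> bdry_rows K r = bdry K r *m faces_embedding K r.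
Proof.
move=> Kcx; apply/matrixP => i k; rewrite !mxE.
under eq_bigr => j _ do rewrite !mxE.
have [kK|nkK] := boolP (enum_val k \in faces_card K r).
  rewrite (bigD1 (enum_rank_in kK (enum_val k))) //= enum_rankK_in // eqxx mulr1.
  rewrite big1 ?addr0 // => j jk.
  case: eqP => [ejk|]; last by rewrite mulr0.
  by move: jk; rewrite (_ : j = enum_rank_in kK (enum_val k)) ?eqxx //;
    apply: enum_val_inj; rewrite enum_rankK_in.
rewrite big1; last first.
  move=> j _; case: eqP => [ejk|]; last by rewrite mulr0.
  by move: nkK; rewrite -ejk enum_valP.
apply/eqP; apply: contraNT nkK; apply: bcoef_face_card Kcx _; exact: enum_valP.
Qed.

Lemma rank_bdry_rows K r :
  simplicial_complex K -> \rank (bdry_rows K r) = \rank (bdry K r).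
Proof. by move=> Kcx; rewrite bdry_rowsE // mxrankMfree // faces_embedding_free. Qed.

Lemma rank_bdry_rows_add K L r s :
  faces_card L r.+1 = s |: faces_card K r.+1 ->
  ~~ (bdry_vec s <= bdry_rows K r)%MS ->
  \rank (bdry_rows L r) = (\rank (bdry_rows K r)).+1.
Proof.
move=> eL ns.
have -> : \rank (bdry_rows L r) = \rank (bdry_rows K r + bdry_vec s)%MS.
  apply/eqP; rewrite eqn_leq !mxrankS //.
    rewrite addsmx_sub bdry_vec_sub ?eL ?setU11 // andbT.
    by apply/row_subP => i; rewrite row_bdry_rows bdry_vec_sub // eL setU1r ?enum_valP.
  apply/row_subP => i; rewrite row_bdry_rows.
  have : enum_val i \in s |: faces_card K r.+1 by rewrite -eL enum_valP.
  case/setU1P => [->|rhoK]; first exact: addsmxSr.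
  exact: submx_trans (bdry_vec_sub rhoK) (addsmxSl _ _).
apply/eqP; rewrite eqn_leq; apply/andP; split.
  apply: leq_trans (mxrank_adds_leqif _ _).1 _.
  by apply: leq_trans (leq_add (leqnn _) (rank_leq_row (bdry_vec s))) _; rewrite addn1.
rewrite (ltn_leqif (mxrank_leqif_sup (addsmxSl _ _))).
by apply: contra ns => h; exact: submx_trans (addsmxSr _ _) h.
Qed.

Lemma rank_bdry_eq0 K r :
  faces_card K r.+2 = set0 -> \rank (bdry K r.+1) = 0%N.
Proof. by move=> eK; apply/eqP; rewrite -leqn0 -(cards0 {set 'I_n}) -eK rank_leq_row. Qed.

Lemma betti_add_face K L r s phi :
  simplicial_complex K -> simplicial_complex L ->
  faces_card L r.+1 = s |: faces_card K r.+1 -> s \notin faces_card K r.+1 ->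
  faces_card K r.+2 = set0 -> faces_card L r.+2 = set0 ->
  cocycle K r phi -> \sum_X bcoef s X * phi X != 0 ->
  betti L r = betti K r.
Proof.
move=> Kcx Lcx eL nsK eK eL2 Kphi sphi.
have ns : ~~ (bdry_vec s <= bdry_rows K r)%MS.
  by apply: contra sphi => /(cocycle_bdry_span Kphi) ->.
rewrite /betti (rank_bdry_eq0 eK) (rank_bdry_eq0 eL2) !subn0 -!rank_bdry_rows //.
by rewrite (rank_bdry_rows_add eL ns) eL cardsU1 nsK add1n subSS.
Qed.
End BoundaryRank.

Section Purity.
Variable n : nat.
Implicit Types (K : {set {set 'I_n}}) (F G s : {set 'I_n}).

Lemma face_in_facet K F : F \in K -> exists2 G, G \in facets K & F \subset G.
Proof.
move=> FK; set P := [pred G | (G \in K) && (F \subset G)].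
have PF : P F by rewrite /P /= FK subxx.
case: (arg_maxnP (fun G => #|G|) PF) => G /andP [GK sFG] Gmax.
exists G => //; rewrite inE GK; apply/forall_inP => H HK; apply/implyP => sGH.
by rewrite eq_sym eqEcard sGH; apply: Gmax; rewrite /P /= HK (subset_trans sFG sGH).
Qed.

Lemma facets_pure K r : pure_of_dim K r -> facets K = faces_card K r.+1.
Proof.
move=> [[_ Kdim] Kpure]; apply/setP => F; rewrite [RHS]inE.
apply/idP/andP => [Ffacet|[FK /eqP cF]].
  by split; [move: Ffacet; rewrite inE => /andP [] | rewrite Kpure].
rewrite inE FK; apply/forall_inP => G GK; apply/implyP => sFG.
by rewrite eq_sym eqEcard sFG cF Kdim.
Qed.

Lemma pure_face_top K r F : pure_of_dim K r -> F \in K ->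
  exists2 G, G \in K & F \subset G /\ #|G| = r.+1.
Proof.
move=> [_ Kpure] /face_in_facet [G Gfacet sFG]; exists G; last by rewrite Kpure.
by move: Gfacet; rewrite inE => /andP [].
Qed.

Lemma pure_of_dim_top K r : has_dim K r ->
  (forall F, F \in K -> exists2 G, G \in K & F \subset G /\ #|G| = r.+1) ->
  pure_of_dim K r.
Proof.
move=> Kdim Ktop; split => // F; rewrite inE => /andP [FK /forall_inP Fmax].
by have [G GK [sFG <-]] := Ktop F FK; have /implyP/(_ sFG)/eqP -> := Fmax G GK.
Qed.

Lemma faces_card_over_dim K r :
  (forall F, F \in K -> #|F| <= r.+1) -> faces_card K r.+2 = set0.
Proof.
move=> Kdim; apply/setP => F; rewrite !inE.
by apply/negbTE; apply/andP => -[/Kdim + /eqP cF]; rewrite cF ltnn.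
Qed.

Lemma faces_card_add_simplex K r s :
  #|s| = r.+1 ->
  faces_card (K :|: powerset s) r.+1 = s |: faces_card K r.+1.
Proof.
move=> cs; apply/setP => F; rewrite !inE.
case: (eqVneq F s) => [->|nFs] /=; first by rewrite subxx cs eqxx orbT andbT.
case: (F \in K) => //=; apply/negbTE/andP => -[sFs /eqP cF].
by move: nFs; rewrite eqEcard sFs cF cs leqnn.
Qed.
End Purity.

Section AddSimplex.
Variable n : nat.
Implicit Types (K : {set {set 'I_n}}) (F G X s : {set 'I_n}).
Local Open Scope ring_scope.

Lemma Kclass_add_simplex r beta K s phi :
  Kclass r beta K -> #|s| = r.+1 -> cocycle K r phi ->
  \sum_X bcoef s X * phi X != 0 ->
  Kclass r beta (K :|: powerset s) /\
  #|facets (K :|: powerset s)| = (#|facets K|).+1.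
Proof.
move=> [Kcx [Kpure bK]] cs Kphi sphi; have [Kclosed Kvert] := Kcx.
have [[_ Kdim] _] := Kpure.
set L := K :|: powerset s.
have nsK : s \notin faces_card K r.+1 by apply: contra sphi => /Kphi ->.
have eL := faces_card_add_simplex K cs.
have Lcx : simplicial_complex L.
  split=> [F G|v]; rewrite !inE; last by rewrite Kvert.
  case/orP => [/Kclosed FK /FK ->|sFs sGF] //.
  by rewrite (subset_trans sGF sFs) orbT.
have Ldim : forall F, F \in L -> (#|F| <= r.+1)%nat.
  by move=> F; rewrite !inE => /orP [/Kdim|/subset_leq_card]; rewrite ?cs.
have Lpure : pure_of_dim L r.
  apply: pure_of_dim_top => [|F]; first by split=> //; exists s; rewrite // !inE subxx orbT.
  rewrite !inE => /orP [/(pure_face_top Kpure) [G GK sFG]|sFs].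
    by exists G; rewrite // inE GK.
  by exists s; rewrite // !inE subxx orbT.
split; first split=> //; first split=> //.
  by rewrite (betti_add_face Kcx Lcx eL nsK _ _ Kphi) ?faces_card_over_dim.
by rewrite (facets_pure Lpure) (facets_pure Kpure) eL cardsU1 nsK.
Qed.
End AddSimplex.

Section RidgeGraph.
Variable n : nat.
Implicit Types (K : {set {set 'I_n}}) (F G s t : {set 'I_n}).

Lemma up_neighbors_sym K i : symmetric (up_neighbors K i).
Proof.
move=> F G; rewrite /up_neighbors setUC (eq_sym F).
by case: (F \in K) (G \in K) (#|F| == i.+1) (#|G| == i.+1) => [] [] [] [].
Qed.

Lemma up_neighbors_setD1 K i t a b :
  simplicial_complex K -> t \in K -> #|t| = i.+2 ->
  a \in t -> b \in t -> a != b -> up_neighbors K i (t :\ a) (t :\ b).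
Proof.
move=> [Kclosed _] tK ct ta tb ab.
have tU : (t :\ a) :|: (t :\ b) = t.
  apply/setP => x; rewrite !inE -andb_orl; case: (eqVneq x a) => [->|//].
  by rewrite ta ab.
rewrite /up_neighbors tU tK ct !(Kclosed t _ tK (subsetDl _ _)) /=.
have ctD1 c : c \in t -> #|t :\ c| = i.+1.
  by move=> tc; apply: succn_inj; rewrite -ct (cardsD1 c t) tc.
rewrite !ctD1 // !eqxx /= andbT.
by apply/eqP => /setP /(_ b); rewrite !inE eqxx tb eq_sym ab.
Qed.

Lemma connect_card_sets (e : rel {set 'I_n}) k :
  (forall s a b, #|s| = k.+1 -> a \in s -> b \in s -> connect e (s :\ a) (s :\ b)) ->
  forall F G, #|F| = k -> #|G| = k -> connect e F G.
Proof.
move=> e_swap F G cF cG; have [m] := ubnP #|F :\: G|.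
elim: m F cF => [|m IH] F cF; first by rewrite ltn0.
rewrite ltnS => dFG.
have [/eqP|[x]] := set_0Vmem (F :\: G).
  rewrite setD_eq0 => sFG.
  by rewrite (_ : F = G) ?connect0 //; apply/eqP; rewrite eqEcard sFG cF cG leqnn.
rewrite inE => /andP [xG xF].
have /set0Pn [y] : G :\: F != set0.
  by rewrite -card_gt0 cardsD setIC cG -cF -cardsD card_gt0; apply/set0Pn; exists x; rewrite inE xG.
rewrite inE => /andP [yF yG].
have xy : x != y by apply: contraNneq yF => <-.
set F' := y |: (F :\ x).
have cF' : #|F'| = k.
  by rewrite cardsU1 inE (negbTE yF) andbF -cF (cardsD1 x F) xF.
have dF'G : #|F' :\: G| < m.
  apply: leq_trans dFG; rewrite (cardsD1 x (F :\: G)) inE xG xF add1n ltnS.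
  apply/subset_leq_card/subsetP => z; rewrite !inE.
  case: (eqVneq z y) => [->|_]; first by rewrite yG.
  by case: (z \in G); case: (z == x); case: (z \in F).
apply: (@connect_trans _ e F'); last exact: IH.
have cs : #|y |: F| = k.+1 by rewrite cardsU1 yF cF.
have := e_swap _ y x cs (setU11 _ _) (setU1r _ xF).
rewrite setU1K //; congr (connect e F _); apply/setP => z; rewrite !inE.
by case: (eqVneq z y) => [->|]; rewrite // eq_sym xy.
Qed.
End RidgeGraph.

Section MaximalComplex.
Variables (n r beta : nat) (K : {set {set 'I_n}}).
Hypothesis KK : Kclass r beta K.
Hypothesis K_max :
  forall L : {set {set 'I_n}}, Kclass r beta L -> #|facets L| <= #|facets K|.
Hypothesis r_gt0 : 0 < r.
Implicit Types (S s X : {set 'I_n}).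
Local Open Scope ring_scope.

Lemma maximal_cocycle s phi :
  #|s| = r.+1 -> cocycle K r phi -> \sum_X bcoef s X * phi X = 0.
Proof.
move=> cs Kphi; apply: contraTeq isT => sphi.
have [/K_max le_facets card_facets] := Kclass_add_simplex KK cs Kphi sphi.
by move: le_facets; rewrite card_facets ltnn.
Qed.

Lemma maximal_ridge_mem S : #|S| = r -> S \in K.
Proof.
move=> cS; apply/negPn/negP => nSK.
have [[Kclosed _] [[[[F0 _ cF0] _] _] _]] := KK.
have /subsetPn [v _ vS] : ~~ ([set: 'I_n] \subset S).
  apply: contraTN (subset_leq_card (subsetT F0)) => /subset_leq_card.
  by rewrite cF0 cS -ltnNge ltnS.
have cs : #|v |: S| = r.+1 by rewrite cardsU1 vS cS.
have Kphi : cocycle K r (fun X => (X == S)%:R).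
  move=> rho; rewrite inE sum_bcoef_indicator => /andP [rhoK _].
  apply/eqP; apply: contraNT nSK => /bcoef_support [sSrho _].
  exact: Kclosed sSrho.
have := maximal_cocycle cs Kphi; rewrite sum_bcoef_indicator => /eqP.
apply/negP; rewrite bcoef_neq0 ?subsetUr //.
by rewrite setDUl setDv setU0 (setDidPl _) ?cards1 // disjoints1.
Qed.

Lemma maximal_swap_connect s a b : #|s| = r.+1 -> a \in s -> b \in s ->
  connect (up_neighbors K r.-1) (s :\ a) (s :\ b).
Proof.
move=> cs sa sb; have [->|ab] := eqVneq a b; first exact: connect0.
apply: contraTT isT => not_conn; have [Kcx _] := KK.
set e := up_neighbors K r.-1.
set D := s :\: [set a; b].
have sabs : [set a; b] \subset s by rewrite subUset !sub1set sa sb.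
have dsD : s :\: D = [set a; b] by rewrite setDDr setDv set0U; apply/setIidPr.
have cD : r.+1 = #|D|.+2.
  by rewrite cardsDS // cards2 ab cs; lia.
set g := fun X => (connect e (s :\ a) X)%:R : R.
have Kphi : cocycle K r (fun X => g X * bcoef X D).
  move=> rho; rewrite inE => /andP [rhoK /eqP crho].
  apply: sum_bcoef_bcoef_eq0; first by rewrite crho cD.
  move=> c d rc rd; have [->//|cd] := eqVneq c d.
  rewrite /g; suff -> : connect e (s :\ a) (rho :\ c) = connect e (s :\ a) (rho :\ d) by [].
  have edge : e (rho :\ c) (rho :\ d).
    by apply: up_neighbors_setD1; rewrite // crho prednK.
  apply/idP/idP => /connect_trans; apply; apply: connect1 => //.
  by rewrite /e up_neighbors_sym.
have := maximal_cocycle cs Kphi.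
rewrite (sum_bcoef_bcoef_pair _ (subsetDl _ _) dsD ab) /g connect0 (negbTE not_conn).
rewrite mul0r mulr0 addr0 mul1r; apply: contra_eqN => _.
rewrite mulf_neq0 ?bcoef_setD1_neq0 // bcoef_neq0 ?subsetD1 ?subsetDl //.
  by rewrite !inE eqxx.
by rewrite (setD1_setD_pair dsD ab) cards1.
Qed.

End MaximalComplex.

Theorem mainTheorem3 (n r beta : nat) (K : {set {set 'I_n}}) :
  (1 <= r)%N ->
  Kclass r beta K ->
  (forall L : {set {set 'I_n}}, Kclass r beta L -> #|facets L| <= #|facets K|)%N ->
  (forall S : {set 'I_n}, #|S| = r -> S \in K) /\ path_connected K r.-1.
Proof.
move=> r_gt0 KK K_max; split; first exact: maximal_ridge_mem KK K_max.
move=> F G _ _ cF cG; rewrite prednK // in cF cG.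
have := connect_card_sets (maximal_swap_connect KK K_max r_gt0) cF cG.
by case/connectP => p p_path ->; exists p.
Qed.
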